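(* Let $G$ be a 2-connected graph, let $(T,\mathcal{V})$ be a full tree decomposition of $G$, and let $t\in V(T)$. If $\mathrm{lct}(G)>|V_t|-2$, then $V_t$ has an $\ell$-attractor with $\ell\leq 2$, i.e. there is a longest cycle of $G$ that is an $\ell$-attractor for $V_t$ for some $\ell\le 2$.
   Context: All graphs are finite and simple. A tree decomposition of $G$ is a pair $(T,\mathcal{V})$, $T$ a tree and $\mathcal{V}=\{V_t:t\in V(T)\}$ a collection of distinct subsets (bags) of $V(G)$, such that every vertex lies in a bag, every edge has both ends in some bag, and for each vertex the nodes whose bags contain it form a subtree of $T$. If $G$ has treewidth $k$ (the minimum over tree decompositions of the maximum bag size minus one), a full tree decomposition is a tree decomposition with $|V_t|=k+1$ for all nodes $t$ and $|V_t\cap V_{t'}|=k$ for all edges $tt'\in E(T)$. $\mathrm{lct}(G)$ is the minimum cardinality of a set of vertices meeting every longest cycle of $G$. For $S\subseteq V(G)$, $S$ separates a vertex set $X$ if two vertices of $X$ lie in different components of $G-S$; a cycle $C$ crosses $S$ if $S$ separates $V(C)$, and otherwise $C$ is fenced by $S$. Two cycles are $S$-equivalent if they have the same intersection with $S$. A longest cycle $C$ is an attractor for $S$ if $C$ is fenced by $S$ and every longest cycle $S$-equivalent to $C$ is also fenced by $S$; it is an $\ell$-attractor for $S$ if moreover $|V(C)\cap S|=\ell$. *)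

(* A finite simple graph is a symmetric irreflexive
   relation e : rel T on a finite type T of vertices. *)
From mathcomp Require Import all_boot.
From Stdlib Require Import ClassicalEpsilon.
Set Implicit Arguments. Unset Strict Implicit. Unset Printing Implicit Defensive.

Definition asbool (P : Prop) : bool :=
  if excluded_middle_informative P then true else false.

Section Graphs.
Variable T : finType.
Implicit Types (e : rel T) (A S X : {set T}) (c : seq T).

Definition restrict e A : rel T := [rel x y | [&& x \in A, y \in A & e x y]].

Definition connected_in e A : Prop :=
  {in A &, forall x y, connect (restrict e A) x y}.

Definition is_cycle e c : Prop := [/\ uniq c, 3 <= size c & cycle e c].

Definition cverts c : {set T} := [set x in c].

Definition longest_cycle e c : Prop :=
  is_cycle e c /\ forall c', is_cycle e c' -> size c' <= size c.

Definition hitting e X : Prop :=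
  forall c, longest_cycle e c -> exists2 x, x \in X & x \in c.

(* lct(G): minimum cardinality of a set meeting every longest cycle
   (every hitting set has size <= #|T|, so #|T| is a neutral start value) *)
Definition lct e : nat :=
  \big[minn/#|T|]_(X : {set T} | asbool (hitting e X)) #|X|.

Definition two_connected e : Prop :=
  2 < #|T| /\ forall Y : {set T}, #|Y| < 2 -> connected_in e (~: Y).

Definition separates e S X : Prop :=
  exists x y, [/\ x \in X :\: S, y \in X :\: S &
                  ~~ connect (restrict e (~: S)) x y].

Definition crosses e S c : Prop := separates e S (cverts c).
Definition fenced e S c : Prop := ~ crosses e S c.

Definition S_equivalent S c c' : Prop := cverts c :&: S = cverts c' :&: S.

Definition attractor e S c : Prop :=
  [/\ longest_cycle e c, fenced e S c &
      forall c', longest_cycle e c' -> S_equivalent S c c' -> fenced e S c'].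

Definition l_attractor e S c (l : nat) : Prop :=
  attractor e S c /\ #|cverts c :&: S| = l.

End Graphs.

Definition is_tree (I : finType) (tE : rel I) : Prop :=
  [/\ symmetric tE, irreflexive tE, 0 < #|I|, connected_in tE setT &
      forall c, ~ is_cycle tE c].

Definition is_td (T I : finType) (e : rel T) (tE : rel I) (B : I -> {set T}) : Prop :=
  [/\ is_tree tE,
      injective B,
      forall x, exists i, x \in B i,
      forall x y, e x y -> exists i, (x \in B i) && (y \in B i) &
      forall x, connected_in tE [set i | x \in B i]].

Definition td_width (T I : finType) (B : I -> {set T}) : nat :=
  (\max_(i : I) #|B i|).-1.

Definition treewidth (T : finType) (e : rel T) (k : nat) : Prop :=
  (exists (I : finType) (tE : rel I) (B : I -> {set T}),
      is_td e tE B /\ td_width B = k) /\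
  (forall (I : finType) (tE : rel I) (B : I -> {set T}),
      is_td e tE B -> k <= td_width B).

Definition full_td (T I : finType) (e : rel T) (k : nat) (tE : rel I)
    (B : I -> {set T}) : Prop :=
  [/\ is_td e tE B, treewidth e k,
      forall i, #|B i| = k.+1 &
      forall i j, tE i j -> #|B i :&: B j| = k].

(* Suppose no longest cycle is an l-attractor of V_t with l <= 2.  A longest
   cycle meeting V_t in at most one vertex is fenced, hence an attractor; and
   as lct(G) > |V_t| - 2, for x, y in V_t some longest cycle avoids
   V_t \ {x, y}.  So for every pair {x, y} of V_t some longest cycle meets V_t
   exactly in {x, y}.  For a pair {a, b} such a cycle is not an attractor, so
   a longest cycle C = a p b q with the same trace crosses V_t: u in p and v in
   q lie in different components of G - V_t, and wlog |q| <= |p|.  Since the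
   decomposition is full, V_t is not contained in the bag of the neighbour t'
   of t towards the component K of u, and a vertex x1 of V_t outside that bag
   has no neighbour in K.  A longest cycle D meeting V_t exactly in {x1, a}
   then misses K, hence p, and b.  If the component of v meets D, the walk
   a p b continued inside that component until it hits D is a path from a to D
   with more than |D|/2 edges; otherwise a path from b to x1 in G - a leaves
   C for the last time at some y and reaches D, and the longer arc of C from
   a to y followed by this path is such a path.  Closing it along the longer
   arc of D gives a cycle longer than D. *)

From mathcomp Require Import all_boot zify.
From Stdlib Require Import Classical ClassicalEpsilon.
Set Implicit Arguments. Unset Strict Implicit. Unset Printing Implicit Defensive.

Section Paths.
Variables (T : finType) (e : rel T).
Hypothesis sym_e : symmetric e.
Implicit Types (A : {set T}) (x y : T) (s : seq T).

Lemma restrict_sym A : symmetric (restrict e A).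
Proof. by move=> x y; rewrite /restrict /= sym_e andbCA. Qed.

Lemma connect_restrict_sym A x y :
  connect (restrict e A) x y = connect (restrict e A) y x.
Proof. exact/sym_connect_sym/restrict_sym. Qed.

Lemma path_restrict_sub A x s : path (restrict e A) x s -> {subset s <= A}.
Proof.
elim: s x => //= y s IH x /andP[/and3P[_ yA _] /IH sA] z.
by rewrite inE => /orP[/eqP->|/sA].
Qed.

Lemma path_restrictW A x s : path (restrict e A) x s -> path e x s.
Proof. by apply: sub_path => u v /and3P[]. Qed.

Lemma path_restrict A x s :
  x \in A -> {subset s <= A} -> path e x s -> path (restrict e A) x s.
Proof.
move=> xA sA; apply: (@sub_in_path _ (mem A)).
  by move=> u v uA vA euv; rewrite /restrict /= uA vA euv.
by apply/andP; split; last exact/allP.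
Qed.

Lemma connect_restrict_mem A x y :
  connect (restrict e A) x y -> x != y -> y \in A.
Proof.
move=> /connectP[s p ->]; case/lastP: s p => [|s z]; first by rewrite eqxx.
by rewrite last_rcons => /path_restrict_sub sA _; apply: sA; rewrite mem_rcons mem_head.
Qed.

Lemma path_connect_restrict A x s : {subset s <= A} -> path e x s ->
  {in s &, forall y z, connect (restrict e A) y z}.
Proof.
case: s => // h s sA /= /andP[_ ps] y z ys zs.
have hA : h \in A by apply: sA; rewrite mem_head.
have {}sA : {subset s <= A} by move=> w ws; apply: sA; rewrite inE ws orbT.
have /path_connect c := path_restrict hA sA ps.
by apply: connect_trans (c _ zs); rewrite connect_restrict_sym; apply: c.
Qed.

End Paths.

Section Arcs.
Variables (T : eqType) (e : rel T).
Hypothesis sym_e : symmetric e.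

Lemma uniq_split2 (a b : T) p q : uniq (a :: p ++ b :: q) ->
  [&& a \notin p ++ q, b \notin p ++ q & uniq (p ++ q)].
Proof.
rewrite [uniq (_ :: _)]cons_uniq (uniq_catCA p [:: b] q) cat1s cons_uniq !mem_cat inE.
by case/and3P => /norP[ap /norP[_ aq]] -> ->; rewrite negb_or ap aq.
Qed.

Lemma cycle_cat_cons a p b q : cycle e (a :: p ++ b :: q) ->
  [/\ path e a p, e (last a p) b, path e b q & e (last b q) a].
Proof. by rewrite /= rcons_cat cat_path /= rcons_path => /and4P. Qed.

Lemma path_rev_sym x s : path e (last x s) (rev (belast x s)) = path e x s.
Proof. by rewrite rev_path; apply: eq_path => u v; rewrite sym_e. Qed.

Lemma cycle_arc_half C a c : cycle e C -> uniq C -> a \in C -> c \in C -> a != c ->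
  exists r, [/\ path e a r, last a r = c, uniq (a :: r), {subset r <= C} &
     size C <= (size r).*2].
Proof.
move=> cC uC aC cC' ac; case: (rot_to_arc uC aC cC' ac) => i p1 p2 _ _ rC.
have: cycle e (a :: p1 ++ c :: p2) by rewrite -rC rot_cycle.
case/cycle_cat_cons => pp1 ep1 pp2 ep2.
have uC' : uniq (a :: p1 ++ c :: p2) by rewrite -rC rot_uniq.
have memC w : w \in a :: p1 ++ c :: p2 -> w \in C by rewrite -rC mem_rot.
have szC : size C = (size p1 + size p2).+2 by rewrite -(size_rot i) rC /= size_cat /= addnS.
case: (leqP (size p2) (size p1)) => hp.
- exists (rcons p1 c); split.
  + by rewrite rcons_path pp1 ep1.
  + by rewrite last_rcons.
  + by move: uC'; rewrite -cat_rcons -cat_cons cat_uniq => /andP[].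
  + by move=> w wr; apply: memC; rewrite -cat_rcons inE mem_cat wr orbT.
  + by rewrite szC size_rcons; lia.
- exists (rev (c :: p2)); split.
  + by have := path_rev_sym c (rcons p2 a); rewrite last_rcons belast_rcons rcons_path pp2 ep2.
  + by rewrite rev_cons last_rcons.
  + move: uC'; rewrite /= mem_rev rev_uniq !mem_cat !negb_or cat_uniq.
    by case/andP=> /andP[_ ->] /and3P[_ _ ->].
  + by move=> w; rewrite mem_rev => wc; apply: memC; rewrite inE mem_cat wc !orbT.
  + by rewrite szC size_rev /=; lia.
Qed.

End Arcs.

Section Bridges.
Variables (T : eqType) (r : rel T) (P1 P2 : pred T).
Hypothesis P12 : forall x, P1 x -> ~~ P2 x.
Local Notation inner := (predC (predU P1 P2)).

Lemma bridge_rec s y m : P1 y -> all inner m -> path r y (m ++ s) ->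
  P2 (last y (m ++ s)) ->
  exists y' m' z, [/\ P1 y', P2 z, all inner m', path r y' (rcons m' z) &
    {subset y' :: rcons m' z <= y :: m ++ s}].
Proof.
elim: s y m => [|z s IH] y m P1y am; rewrite ?cats0.
  move=> _; case/lastP: m am => [|m w]; first by rewrite /= (negPf (P12 P1y)).
  by rewrite all_rcons last_rcons /= negb_or => /andP[/andP[_ /negPf->]].
rewrite -cat_rcons cat_path last_cat last_rcons => /andP[pm ps] P2l.
have sub_s : {subset z :: s <= y :: rcons m z ++ s}.
  by move=> w; rewrite !inE mem_cat mem_rcons inE => /orP[->|->]; rewrite ?orbT.
case: (boolP (P2 z)) => P2z.
  exists y, m, z; split => // w; rewrite !inE mem_cat => /orP[->//|wm].
  by rewrite wm orbT.
case: (boolP (P1 z)) => P1z.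
  have [y' [m' [z' [? ? ? ? sub]]]] := IH z [::] P1z isT ps P2l.
  by exists y', m', z'; split => // w /sub; apply: sub_s.
apply: (IH y (rcons m z)) => //; last by rewrite last_cat last_rcons.
- by rewrite all_rcons /= negb_or P1z P2z.
- by rewrite cat_path pm last_rcons.
Qed.

Lemma exists_bridge x s : P1 x -> path r x s -> P2 (last x s) ->
  exists y m z, [/\ P1 y, P2 z, all inner m,
    path r y (rcons m z) /\ uniq (y :: rcons m z) &
    {subset y :: rcons m z <= x :: s}].
Proof.
move=> P1x pxs P2l.
have [y [m [z [P1y P2z am pm sub]]]] := bridge_rec (m := [::]) P1x isT pxs P2l.
move: (last_rcons y m z); case: (shortenP pm) => w pw uw sw.
case/lastP: w pw uw sw => [_ _ _ /= zy|w z'].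
  by move: P2z; rewrite -zy (negPf (P12 P1y)).
rewrite last_rcons => pw uw sw zz; subst z'.
have zw : z \notin w by move: uw; rewrite /= rcons_uniq => /andP[_ /andP[]].
exists y, w, z; split => //.
  apply/allP => u uw'; have := sw u; rewrite !mem_rcons !inE uw' orbT => /(_ isT).
  by case/orP => [/eqP uz|um]; [move: zw; rewrite -uz uw' | apply: (allP am)].
move=> u; rewrite inE => /orP[/eqP->|/sw uw']; apply: sub; first exact: mem_head.
by rewrite inE uw' orbT.
Qed.

End Bridges.

Section LongestCycles.
Variables (T : finType) (e : rel T).
Hypothesis sym_e : symmetric e.

(* [a :: P] closed up by the longer arc of [D] from [last a P] back to [a] is a
   cycle with at least [size P + size D / 2] vertices. *)
Lemma longest_cycle_path_half D a P :
  longest_cycle e D -> a \in D -> path e a P -> uniq (a :: P) ->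
  last a P \in D -> {in P, forall u, u \in D -> u = last a P} ->
  (size P).*2 <= size D.
Proof.
move=> [[uD sD cD] lD] aD pP uP.
case/lastP: P pP uP => [|P d]; first by rewrite double0.
rewrite last_rcons => pP uP dD PD.
have ad : a != d by apply: contraNneq (proj1 (andP uP)) => <-; rewrite mem_rcons mem_head.
have [A [pA lA uA AD hA]] := cycle_arc_half sym_e cD uD aD dD ad.
case/lastP: A pA lA uA AD hA => [_ /= da|A z]; first by rewrite da eqxx in ad.
rewrite last_rcons => pA zd uA AD hA; subst z.
have [aA dA uA'] : [/\ a \notin A, d \notin A & uniq A].
  by move: uA; rewrite /= mem_rcons inE negb_or rcons_uniq => /andP[/andP[_ ->] /andP[-> ->]].
set c := a :: rcons P d ++ rev A.
have cc : cycle e c.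
  rewrite /c /= rcons_cat cat_path pP /= last_rcons.
  have := path_rev_sym sym_e a (rcons A d); rewrite last_rcons belast_rcons pA.
  by rewrite rev_cons.
have uc : uniq c.
  rewrite /c -cat_cons cat_uniq uP rev_uniq uA' andbT.
  apply/hasPn => x; rewrite mem_rev => xA; rewrite inE negb_or.
  apply/andP; split; first by apply: contraNneq aA => <-.
  apply: contraNN dA => /PD <-; first by [].
  by apply: AD; rewrite mem_rcons inE xA orbT.
have szc : size c = (size P + size A).+2.
  by rewrite /c /= size_cat size_rev size_rcons addSn.
rewrite size_rcons in hA.
have /lD : is_cycle e c.
  split => //; rewrite szc !ltnS addn_gt0; apply/orP; right.
  by move: hA sD; case: (A) => //= h1 h2; move: (leq_trans h2 h1).
have arith (nP nA nD : nat) : nD <= nA.+1.*2 -> (nP + nA).+2 <= nD -> nP.+1.*2 <= nD.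
  by clear; rewrite -!addnn; lia.
by rewrite szc size_rcons; apply: arith hA.
Qed.

End LongestCycles.

Section Trace.
Variables (T : finType) (e : rel T).
Hypothesis sym_e : symmetric e.
Variable S : {set T}.
Local Notation R := (restrict e (~: S)).

Lemma trace_le1_fenced c : is_cycle e c -> #|cverts c :&: S| <= 1 -> fenced e S c.
Proof.
move=> [uc sc cc] hc [x [y [xc yc /negP]]]; apply.
have [x0 [r [pr rS cr]]] : exists x0 r,
    [/\ path e x0 r, {subset r <= ~: S} & {subset cverts c :\: S <= r}].
  case: (boolP [exists w in cverts c, w \in S]) => [/exists_inP[s0] | cS].
    rewrite inE => s0c s0S.
    case: (rot_to s0c) => i r rc.
    have /andP[s0r ur] : uniq (s0 :: r) by rewrite -rc rot_uniq.
    have memc w : (w \in c) = (w \in s0 :: r) by rewrite -(mem_rot i) rc.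
    exists s0, r; split.
    - by have := cc; rewrite -(rot_cycle i) rc /= rcons_path => /andP[].
    - move=> w wr; rewrite inE; apply: contraT => /negbNE wS.
      have : 1 < #|cverts c :&: S|.
        apply/card_gt1P; exists w, s0; rewrite !inE memc inE wr orbT wS s0c s0S.
        by split=> //; apply: contraNneq s0r => <-.
      by rewrite ltnNge hc.
    - move=> w; rewrite !inE memc inE => /andP[wS /orP[/eqP ws0|//]].
      by move: wS; rewrite ws0 s0S.
  case: c uc sc cc cS {hc xc yc} => // h r' _ _ cc cS; exists h, (rcons r' h); split => //.
  - move=> w; rewrite mem_rcons !inE => wc; apply: contraNN cS => wS.
    by apply/exists_inP; exists w; rewrite ?inE.
  - by move=> w; rewrite !inE mem_rcons inE => /andP[].
by apply: (path_connect_restrict sym_e rS pr); apply: cr.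
Qed.

Lemma trace_le1_attractor c : longest_cycle e c -> #|cverts c :&: S| <= 1 -> attractor e S c.
Proof.
move=> lc hc; split; first by [].
  exact: trace_le1_fenced (proj1 lc) hc.
by move=> c' [ic' _] eqc; apply: trace_le1_fenced ic' _; rewrite -eqc.
Qed.

Lemma mem_trace2 C a b w : cverts C :&: S = [set a; b] ->
  (w \in C) && (w \in S) = (w == a) || (w == b).
Proof. by move/setP/(_ w); rewrite !inE. Qed.

Lemma not_attractor_crossing C0 :
  longest_cycle e C0 -> ~ attractor e S C0 ->
  exists2 C, longest_cycle e C & S_equivalent S C0 C /\ crosses e S C.
Proof.
move=> lC0 natt; apply: NNPP => no; apply: natt; split => // [crC0|C lC eqC crC].
  by apply: no; exists C0.
by apply: no; exists C.
Qed.

Lemma cycle_split_trace2 C a b :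
  is_cycle e C -> cverts C :&: S = [set a; b] -> a != b ->
  exists p q, [/\ is_cycle e (a :: p ++ b :: q), (a :: p ++ b :: q) =i C,
    size (a :: p ++ b :: q) = size C & {subset p ++ q <= ~: S}].
Proof.
move=> [uC sC cC] trC ab.
have trm w := mem_trace2 w trC.
have /andP[aC _] : (a \in C) && (a \in S) by rewrite trm eqxx.
have /andP[bC _] : (b \in C) && (b \in S) by rewrite trm eqxx orbT.
case: (rot_to_arc uC aC bC ab) => i p q _ _ rC.
have memC w : (w \in a :: p ++ b :: q) = (w \in C) by rewrite -rC mem_rot.
have /uniq_split2/and3P[apq bpq _] : uniq (a :: p ++ b :: q) by rewrite -rC rot_uniq.
exists p, q; split; rewrite -?rC ?size_rot //.
- by split; rewrite ?rot_uniq ?size_rot ?rot_cycle.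
- by move=> w; rewrite mem_rot.
move=> w wpq; rewrite inE; apply: contraT => /negbNE wS.
have wC : w \in C.
  by move: wpq; rewrite -memC !inE !mem_cat !inE => /orP[]->; rewrite ?orbT.
have := trm w; rewrite wC wS => /esym/orP[]/eqP wab.
- by move: apq; rewrite -wab wpq.
- by move: bpq; rewrite -wab wpq.
Qed.

(* Each of the two arcs of [D] between [x1] and [a] has an end adjacent to [x1]. *)
Lemma trace2_cycle_avoid D x1 a h :
  is_cycle e D -> cverts D :&: S = [set x1; a] -> x1 != a ->
  (forall v, connect R h v -> ~~ e x1 v) ->
  {in D, forall u, u \notin S -> ~~ connect R h u}.
Proof.
move=> iD trD xa hx u uD uS; apply/negP => hu.
have [p [q [[_ _ cD] memD _ pqS]]] := cycle_split_trace2 iD trD xa.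
have [pp ep pq eq] := cycle_cat_cons cD.
have /andP[_ x1S] : (x1 \in D) && (x1 \in S) by rewrite (mem_trace2 _ trD) eqxx.
have /andP[_ aS] : (a \in D) && (a \in S) by rewrite (mem_trace2 _ trD) eqxx orbT.
have pS : {subset p <= ~: S} by move=> w wp; apply: pqS; rewrite mem_cat wp.
have qS : {subset q <= ~: S} by move=> w wq; apply: pqS; rewrite mem_cat wq orbT.
have : u \in p ++ q.
  move: uD; rewrite -memD !inE !mem_cat !inE.
  case/orP => [/eqP ux|/orP[->//|/orP[/eqP ua|->]]]; rewrite ?orbT //.
    by rewrite ux x1S in uS.
  by rewrite ua aS in uS.
rewrite mem_cat => /orP[up|uq].
- case: p pp up pS {pqS ep memD cD} => // w p pp up pS.
  have /andP[xw _] := pp.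
  have /hx : connect R h w.
    by apply: connect_trans hu (path_connect_restrict sym_e pS pp up (mem_head _ _)).
  by rewrite xw.
- have lq : last a q \in q by case: (q) uq => // w q' _; rewrite /= mem_last.
  have /hx : connect R h (last a q).
    by apply: connect_trans hu (path_connect_restrict sym_e qS pq uq lq).
  by rewrite sym_e eq.
Qed.

Lemma longest_cycle_rev_split a p b q : longest_cycle e (a :: p ++ b :: q) ->
  longest_cycle e (a :: rev q ++ b :: rev p).
Proof.
move=> [[u sz cy] lc].
have key : rot 1 (a :: rev q ++ b :: rev p) = rev (a :: p ++ b :: q).
  by rewrite rot1_cons rev_cons rev_cat rev_cons cat_rcons.
have szr : size (a :: rev q ++ b :: rev p) = size (a :: p ++ b :: q).
  by rewrite -(size_rot 1) key size_rev.
split; last by move=> c' /lc; rewrite szr.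
split; rewrite ?szr //; first by rewrite -(rot_uniq 1) key rev_uniq.
rewrite -(rot_cycle 1) key rev_cycle.
by rewrite (@eq_cycle _ _ e) // => x y; rewrite sym_e.
Qed.

Lemma crossing_split C a b :
  longest_cycle e C -> cverts C :&: S = [set a; b] -> a != b -> crosses e S C ->
  exists p q u v, [/\ longest_cycle e (a :: p ++ b :: q), {subset p ++ q <= ~: S},
    size q <= size p, u \in p /\ v \in q & ~~ connect R u v].
Proof.
move=> lC trC ab [x [y [xC yC nxy]]].
have [p [q [iC' memC szC pqS]]] := cycle_split_trace2 (proj1 lC) trC ab.
have lC' : longest_cycle e (a :: p ++ b :: q) by split=> // c /(proj2 lC); rewrite szC.
have pS : {subset p <= ~: S} by move=> w wp; apply: pqS; rewrite mem_cat wp.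
have qS : {subset q <= ~: S} by move=> w wq; apply: pqS; rewrite mem_cat wq orbT.
have /andP[_ aS] : (a \in C) && (a \in S) by rewrite (mem_trace2 _ trC) eqxx.
have /andP[_ bS] : (b \in C) && (b \in S) by rewrite (mem_trace2 _ trC) eqxx orbT.
have inpq w : w \in cverts C :\: S -> w \in p ++ q.
  rewrite !inE -memC !inE mem_cat inE mem_cat => /andP[wS].
  case/or4P => [/eqP wa|->//|/eqP wb|->]; rewrite ?orbT //.
    by rewrite wa aS in wS.
  by rewrite wb bS in wS.
have [u [v [up vq nuv]]] : exists u v, [/\ u \in p, v \in q & ~~ connect R u v].
  have [_ _ cC'] := iC'; have [pp _ pq _] := cycle_cat_cons cC'.
  move: (inpq x xC) (inpq y yC); rewrite !mem_cat => /orP[xp|xq] /orP[yp|yq].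
  - by rewrite (path_connect_restrict sym_e pS pp xp yp) in nxy.
  - by exists x, y.
  - by exists y, x; rewrite (connect_restrict_sym sym_e).
  - by rewrite (path_connect_restrict sym_e qS pq xq yq) in nxy.
case: (leqP (size q) (size p)) => hqp; first by exists p, q, u, v.
exists (rev q), (rev p), v, u; split.
- exact: longest_cycle_rev_split.
- by move=> w; rewrite mem_cat !mem_rev orbC -mem_cat => /pqS.
- by rewrite !size_rev ltnW.
- by rewrite !mem_rev.
- by rewrite (connect_restrict_sym sym_e).
Qed.

Section Crossing.
Variables (a b x1 u v : T) (p q D : seq T).
Hypotheses (lC : longest_cycle e (a :: p ++ b :: q)) (aS : a \in S) (bS : b \in S)
  (pqS : {subset p ++ q <= ~: S}) (up : u \in p) (vq : v \in q)
  (nuv : ~~ connect R u v) (qp : size q <= size p)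
  (x1u : forall w, connect R u w -> ~~ e x1 w)
  (lD : longest_cycle e D) (trD : cverts D :&: S = [set x1; a]).

Let uC : uniq (a :: p ++ b :: q). Proof. by case: lC => -[]. Qed.
Let cC : cycle e (a :: p ++ b :: q). Proof. by case: lC => -[]. Qed.

Let pS : {subset p <= ~: S}. Proof. by move=> w wp; apply: pqS; rewrite mem_cat wp. Qed.
Let qS : {subset q <= ~: S}. Proof. by move=> w wq; apply: pqS; rewrite mem_cat wq orbT. Qed.

Let u_p : {in p, forall w, connect R u w}.
Proof.
have [pp _ _ _] := cycle_cat_cons cC.
by move=> w wp; apply: (path_connect_restrict sym_e pS pp up wp).
Qed.

Let v_q : {in q, forall w, connect R v w}.
Proof.
have [_ _ pq _] := cycle_cat_cons cC.
by move=> w wq; apply: (path_connect_restrict sym_e qS pq vq wq).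
Qed.

Let size_D : size D = size (a :: p ++ b :: q).
Proof. by apply/eqP; rewrite eqn_leq (proj2 lC _ (proj1 lD)) (proj2 lD _ (proj1 lC)). Qed.

Lemma nonadjacent_neq_endpoint : x1 != a.
Proof.
have [pp _ _ _] := cycle_cat_cons cC.
case: p pp up u_p => // w p' /= /andP[aw _] _ /(_ w (mem_head _ _)) /x1u.
by apply: contraNneq => ->.
Qed.

Let D_S w : (w \in D) && (w \in S) = (w == x1) || (w == a).
Proof. exact: mem_trace2 w trD. Qed.

Let a_D : a \in D.
Proof. by have /andP[] : (a \in D) && (a \in S) by rewrite D_S eqxx orbT. Qed.

Let p_notin_D : {in p, forall w, w \notin D}.
Proof.
move=> w wp; apply: contraTN (u_p wp) => wD.
apply: (trace2_cycle_avoid (proj1 lD) trD nonadjacent_neq_endpoint x1u wD).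
by have := pS wp; rewrite inE.
Qed.

Let x1_neq_b : x1 != b.
Proof.
have [pp pb _ _] := cycle_cat_cons cC.
have lp : last a p \in p by case: (p) up => // w p' _; rewrite /= mem_last.
by move: (x1u (u_p lp)); apply: contraNneq => ->; rewrite sym_e.
Qed.

Let b_neq_a : b != a.
Proof. by apply: contraNneq (proj1 (andP uC)) => ->; rewrite mem_cat mem_head orbT. Qed.

Let b_notin_D : b \notin D.
Proof.
apply/negP => bD; have := D_S b; rewrite bD bS /= eq_sym (negPf x1_neq_b).
by rewrite (negPf b_neq_a).
Qed.

Let bridge_from_b y : y \in D -> connect R v y ->
  exists m z, [/\ z \in D, {in m, forall w, w \notin D},
    path e b (rcons m z), uniq (b :: rcons m z) &
    {in rcons m z, forall w, connect R v w /\ w \notin S}].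
Proof.
move=> yD vy; have [_ _ pq _] := cycle_cat_cons cC.
set q0 := head b q.
have [bq0 q0q] : e b q0 /\ q0 \in q.
  by move: pq vq; rewrite /q0; case: (q) => //= w q' /andP[bw _] _; rewrite mem_head.
have : connect R q0 y.
  by apply: connect_trans _ vy; rewrite (connect_restrict_sym sym_e); apply: v_q.
case/connectP => s ps ys.
have pe : path e b (q0 :: s) by rewrite /= bq0 (path_restrictW ps).
have bD w : pred1 b w -> w \notin D by move/eqP->.
have lD_s : mem D (last b (q0 :: s)) by rewrite /= -ys.
have [_ [m [z [/eqP -> zD mi [pm um] sub]]]] := exists_bridge bD (eqxx b) pe lD_s.
exists m, z; split => // [w wm|w wmz].
  by have := allP mi w wm; rewrite /= negb_or => /andP[].
have wb : w != b by apply: contraNneq (proj1 (andP um)) => <-.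
have := sub w; rewrite inE wmz orbT => /(_ isT); rewrite inE (negPf wb) /= => ws.
have q0w : connect R q0 w := path_connect ps ws.
split; first exact: connect_trans (v_q q0q) q0w.
have [<-|q0w'] := eqVneq q0 w; first by have := qS q0q; rewrite inE.
by have := connect_restrict_mem q0w q0w'; rewrite inE.
Qed.

Lemma v_component_misses_D : {in D, forall y, ~~ connect R v y}.
Proof.
move=> y yD; apply/negP => /(bridge_from_b yD)[m [z [zD mD pm um mz]]].
have [pp pb _ _] := cycle_cat_cons cC.
have := longest_cycle_path_half sym_e lD a_D (P := p ++ b :: rcons m z).
rewrite cat_path pp /= pb pm last_cat /= last_rcons => /(_ isT).
have [ap bap] : uniq (a :: p) /\ b \notin a :: p.
  by move: uC; rewrite -cat_cons cat_uniq => /and3P[-> /hasPn/(_ b (mem_head _ _)) ->].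
have uP : uniq (a :: p ++ b :: rcons m z).
  rewrite -cat_cons cat_uniq ap um andbT; apply/hasPn => w; rewrite inE.
  case/orP => [/eqP->//|/mz[vw wS]]; rewrite inE negb_or; apply/andP; split.
    by apply: contraNneq wS => ->.
  apply: contraNN nuv => /u_p uw; apply: connect_trans uw _.
  by rewrite (connect_restrict_sym sym_e).
have PD : {in p ++ b :: rcons m z, forall w, w \in D -> w = z}.
  move=> w; rewrite mem_cat inE mem_rcons inE.
  case/or4P => [/p_notin_D/negP//|/eqP->|/eqP//|/mD/negP//].
  by move/negP: b_notin_D.
move=> /(_ uP zD PD); rewrite size_D /= !size_cat /= size_rcons.
have arith (np nq nm : nat) : nq <= np -> (np + nm.+2).*2 <= (np + nq.+1).+1 -> False.
  by clear; rewrite -addnn; lia.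
exact: arith qp.
Qed.

Let rest_misses_D : {in p ++ b :: q, forall w, w \notin D}.
Proof.
move=> w; rewrite mem_cat inE => /orP[/p_notin_D//|/orP[/eqP->//|wq]].
by apply: contraTN (v_q wq) => wD; apply: v_component_misses_D.
Qed.

Let bridge_avoiding_a : connected_in e (~: [set a]) ->
  exists y m z, [/\ y \in p ++ b :: q, z \in D, {in m, forall w, w \notin D},
    path e y (rcons m z) /\ uniq (y :: rcons m z) &
    {in rcons m z, forall w, w != a /\ w \notin p ++ b :: q}].
Proof.
move=> Ga; set C' := p ++ b :: q.
have x1_D : x1 \in D by have /andP[] : (x1 \in D) && (x1 \in S) by rewrite D_S eqxx.
have [bA x1A] : b \in ~: [set a] /\ x1 \in ~: [set a].
  by rewrite !inE b_neq_a nonadjacent_neq_endpoint.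
case/connectP: (Ga b x1 bA x1A) => s ps x1s.
have bC' : b \in C' by rewrite mem_cat mem_head orbT.
have lD_s : mem D (last b s) by rewrite /= -x1s.
have [y [m [z [yC' zD mi pm sub]]]] :=
  exists_bridge rest_misses_D bC' (path_restrictW ps) lD_s.
exists y, m, z; split => // [w wm|w wmz].
  by have := allP mi w wm; rewrite /= negb_or => /andP[].
split.
  have := sub w; rewrite inE wmz orbT => /(_ isT); rewrite inE.
  by case/orP => [/eqP->|/(path_restrict_sub ps)]; rewrite ?b_neq_a ?inE.
move: wmz; rewrite mem_rcons inE => /orP[/eqP->|wm].
  by apply: contraTN zD; apply: rest_misses_D.
by have := allP mi w wm; rewrite /= negb_or => /andP[].
Qed.

Lemma crossing_cut_vertex : ~ connected_in e (~: [set a]).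
Proof.
move=> /bridge_avoiding_a[y [m [z [yC zD mD [pm um] mz]]]].
have ay : a != y by apply: contraNneq (proj1 (andP uC)) => ->.
have yaC : y \in a :: p ++ b :: q by rewrite inE yC orbT.
have [A [pA lA uA AC hA]] := cycle_arc_half sym_e cC uC (mem_head _ _) yaC ay.
have AC' w : w \in A -> w \in p ++ b :: q.
  move=> wA; have := AC w wA; rewrite inE => /orP[/eqP wa|//].
  by move: uA; rewrite -wa /= wA.
have := longest_cycle_path_half sym_e lD a_D (P := A ++ rcons m z).
rewrite cat_path pA lA pm last_cat lA last_rcons => /(_ isT).
have uP : uniq (a :: A ++ rcons m z).
  rewrite -cat_cons cat_uniq uA; move: um; rewrite cons_uniq => /andP[_ ->].
  rewrite andbT; apply/hasPn => w /mz[wa wC]; rewrite inE negb_or wa /=.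
  by apply: contraNN wC => /AC'.
have PD : {in A ++ rcons m z, forall w, w \in D -> w = z}.
  move=> w; rewrite mem_cat mem_rcons inE.
  by case/or3P => [/AC'/rest_misses_D/negP//|/eqP//|/mD/negP].
move=> /(_ uP zD PD); rewrite size_D size_cat size_rcons.
have arith (nA nm nC : nat) : nC <= nA.*2 -> (nA + nm.+1).*2 <= nC -> False.
  by clear; rewrite -!addnn; lia.
exact: arith hA.
Qed.

End Crossing.

End Trace.

Section Tree.
Variables (I : finType) (tE : rel I).
Hypothesis tree : is_tree tE.
Variable t : I.
Local Notation Tt := (restrict tE (~: [set t])).

Lemma tree_sym : symmetric tE. Proof. by case: tree. Qed.

Lemma tree_branch j : j != t -> exists2 t', tE t t' & connect Tt t' j.
Proof.
case: tree => _ _ _ conn _ jt.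
have := conn t j; rewrite !inE => /(_ isT isT) /connectP[s /path_restrictW ps lj].
move: jt; rewrite lj; case: (shortenP ps) => -[|t1 s'] //=; first by rewrite eqxx.
move=> /andP[tt1 ps'] /andP[ts' _] _ _; exists t1 => //.
apply/connectP; exists s' => //; apply: path_restrict => //.
  by rewrite !inE; apply: contraNneq ts' => <-; rewrite mem_head.
by move=> z zs; rewrite !inE; apply: contraNneq ts' => <-; rewrite inE zs orbT.
Qed.

Lemma tree_branch_uniq t1 t2 j : tE t t1 -> tE t t2 ->
  connect Tt t1 j -> connect Tt t2 j -> t1 = t2.
Proof.
move=> e1 e2 c1 c2; apply/eqP; apply: contraT => ne.
have : connect Tt t1 t2 by apply: connect_trans c1 _; rewrite (connect_restrict_sym tree_sym).
case/connectP => s ps l2; move: l2; case: (shortenP ps) => s' ps' us' _ l2 {ps}.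
case: tree => _ irr _ _ acyc; suff /acyc : is_cycle tE (t :: t1 :: s') by [].
have s't : {subset s' <= ~: [set t]} := path_restrict_sub ps'.
split.
- rewrite cons_uniq us' andbT inE negb_or eq_sym; apply/andP; split.
    by apply: contraTneq e1 => ->; rewrite irr.
  by apply/negP => /s't; rewrite !inE eqxx.
- by case: (s') l2 => [/= l2|//]; rewrite l2 eqxx in ne.
- by rewrite /= e1 rcons_path (path_restrictW ps') -l2 tree_sym.
Qed.

End Tree.

Section TreeDecomposition.
Variables (T I : finType) (e : rel T) (tE : rel I) (B : I -> {set T}).
Hypothesis td : is_td e tE B.
Variable t : I.
Local Notation Tt := (restrict tE (~: [set t])).
Local Notation R := (restrict e (~: B t)).

Lemma bags_connect_off v i j :
  v \notin B t -> v \in B i -> v \in B j -> connect Tt i j.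
Proof.
case: td => _ _ _ _ sub vt vi vj.
have := sub v i j; rewrite !inE => /(_ vi vj).
apply: connect_sub => x y /and3P[]; rewrite !inE => xv yv exy.
apply: connect1; rewrite /restrict /= exy !inE andbT.
by apply/andP; split; apply: contraNneq vt => <-.
Qed.

Lemma component_in_branch u : u \notin B t ->
  exists2 t', tE t t' & forall w j, connect R u w -> w \in B j -> connect Tt t' j.
Proof.
move=> ut; case: td => tr _ cover ecover _.
have [i0 ui0] := cover u.
have i0t : i0 != t by apply: contraNneq ut => <-.
have [t' tt' t'i0] := tree_branch tr i0t.
exists t' => // w j /connectP[s ps ->] {w}.
have Pu j' : u \in B j' -> connect Tt t' j'.
  by move/(bags_connect_off ut ui0); apply: connect_trans.
elim: s u ut ps Pu {ui0} => [|y s IH] x xt /=; first by move=> _; apply.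
move=> /andP[/and3P[_ yS exy] ps] Px.
have yt : y \notin B t by rewrite inE in yS.
apply: IH ps _ => // j' yj'.
have [j0 /andP[xj0 yj0]] := ecover x y exy.
exact: connect_trans (Px j0 xj0) (bags_connect_off yt yj0 yj').
Qed.

Lemma bag_mem_branch x j t' :
  x \in B t -> x \in B j -> tE t t' -> connect Tt t' j -> x \in B t'.
Proof.
case: td => tr _ _ _ sub xt xj tt' t'j.
have t't : t' != t by apply: contraTneq tt' => ->; case: tr => _ irr *; rewrite irr.
have jt : j != t.
  apply: contraTneq t'j => ->; apply/negP.
  by move=> /connect_restrict_mem/(_ t't); rewrite !inE eqxx.
have := sub x j t; rewrite !inE => /(_ xj xt) /connectP[s ps lt].
move: lt; case: (shortenP ps) => s' ps' us' _ lt {ps}.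
case/lastP: s' ps' us' lt => [_ _ /= jt'|s' l]; first by rewrite -jt' eqxx in jt.
rewrite last_rcons rcons_path => /andP[ps' /and3P[xl _ el]] us' tl; subst l.
rewrite inE in xl.
have ts' : t \notin j :: s' by move: us'; rewrite -rcons_cons rcons_uniq => /andP[].
have pT : path Tt j s'.
  apply: path_restrict (path_restrictW ps').
    by rewrite !inE; apply: contraNneq ts' => <-; rewrite mem_head.
  by move=> z zs; rewrite !inE; apply: contraNneq ts' => <-; rewrite inE zs orbT.
have lj : connect Tt (last j s') j.
  by rewrite (connect_restrict_sym (tree_sym tr)); apply/connectP; exists s'.
have tl : tE t (last j s') by rewrite (tree_sym tr).
by rewrite (tree_branch_uniq tr tt' tl t'j lj).
Qed.

End TreeDecomposition.

Section FullTreeDecomposition.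
Variables (T I : finType) (e : rel T) (tE : rel I) (B : I -> {set T}) (k : nat).
Hypothesis full : full_td e k tE B.
Variable t : I.

Lemma exists_bag_vertex_off_component u : u \notin B t ->
  exists2 x1, x1 \in B t & forall w, connect (restrict e (~: B t)) u w -> ~~ e x1 w.
Proof.
case: full => td _ bsize badj ut.
have [t' tt' comp] := component_in_branch td ut.
have : 0 < #|B t :\: B t'| by rewrite cardsD bsize badj // subSnn.
case/card_gt0P => x1; rewrite inE => /andP[x1t' x1t]; exists x1 => // w uw.
apply: contraNN x1t' => ex; have [_ _ _ ecover _] := td.
have [j /andP[x1j wj]] := ecover x1 w ex.
exact: (bag_mem_branch td x1t x1j tt' (comp w j uw wj)).
Qed.

Lemma full_td_bag_gt1 : irreflexive e -> (exists x y, e x y) -> 1 < #|B t|.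
Proof.
case: full => -[_ _ _ ecover _] _ bsize _ irr [x [y exy]].
have [j /andP[xj yj]] := ecover x y exy.
have : 1 < #|B j|.
  by apply/card_gt1P; exists x, y; split => //; apply: contraTneq exy => ->; rewrite irr.
by rewrite !bsize.
Qed.

End FullTreeDecomposition.

Lemma two_connected_edge (T : finType) (e : rel T) : two_connected e -> exists x y, e x y.
Proof.
case=> nT conn.
have /card_gt1P[x [y [_ _ xy]]] : 1 < #|[set: T]| by rewrite cardsT ltnW.
have := conn set0; rewrite cards0 => /(_ isT x y); rewrite !inE => /(_ isT isT).
case/connectP => -[|z s] /= => [_ yx|/andP[/and3P[_ _ exz] _] _]; last by exists x, z.
by rewrite yx eqxx in xy.
Qed.

Lemma big_minn_le (I : finType) (P : pred I) (F : I -> nat) x0 j :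
  P j -> \big[minn/x0]_(i | P i) F i <= F j.
Proof.
rewrite unlock; elim: (index_enum I) (mem_index_enum j) => //= i r IH.
rewrite inE => /orP[/eqP<- ->|/IH h Pj]; first exact: geq_minl.
by case: ifP => _; [apply: leq_trans (geq_minr _ _) (h Pj) | apply: h].
Qed.

Section Lct.
Variables (T : finType) (e : rel T).

Lemma lct_le_hitting (X : {set T}) : hitting e X -> lct e <= #|X|.
Proof.
move=> hX; apply: big_minn_le.
by rewrite /asbool; case: excluded_middle_informative.
Qed.

Lemma longest_cycle_avoiding (Y : {set T}) : #|Y| < lct e ->
  exists2 c, longest_cycle e c & {in Y, forall x, x \notin c}.
Proof.
move=> hY; apply: NNPP => no.
have : hitting e Y.
  move=> c lc; apply: NNPP => nc; apply: no; exists c => // x xY.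
  by apply/negP => xc; apply: nc; exists x.
by move/lct_le_hitting; rewrite leqNgt hY.
Qed.

Lemma longest_cycle_trace2 (S : {set T}) x y :
  #|S| < lct e + 2 -> x \in S -> y \in S -> x != y ->
  exists2 c, longest_cycle e c &
    #|cverts c :&: S| <= 1 \/ cverts c :&: S = [set x; y].
Proof.
move=> hS xS yS xy.
have sxy : [set x; y] \subset S by rewrite subUset !sub1set xS yS.
have S2 : 1 < #|S| by apply/card_gt1P; exists x, y.
have : #|S :\: [set x; y]| < lct e.
  by rewrite cardsD (setIidPr sxy) cards2 xy; move: hS S2; clear; lia.
case/longest_cycle_avoiding => c lc cY; exists c => //.
have sub : cverts c :&: S \subset [set x; y].
  apply/subsetP => z; rewrite !inE => /andP[zc zS]; apply: contraLR zc => zxy.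
  by apply: cY; rewrite !inE zS andbT.
case: (leqP #|cverts c :&: S| 1) => [|h]; [left | right] => //.
by apply/eqP; rewrite eqEcard sub cards2 xy.
Qed.

End Lct.

(* lct(G) > |V_t| - 2 is written over nat as |V_t| < lct(G) + 2 *)
Theorem lemma6p1 (T : finType) (e : rel T) (esym : symmetric e)
    (eirr : irreflexive e) (G2 : two_connected e)
    (I : finType) (tE : rel I) (B : I -> {set T}) (k : nat)
    (full : full_td e k tE B) (t : I)
    (hlct : #|B t| < lct e + 2) :
  exists c (l : nat), l <= 2 /\ l_attractor e (B t) c l.
Proof.
have small c : longest_cycle e c -> #|cverts c :&: B t| <= 1 ->
    exists c (l : nat), l <= 2 /\ l_attractor e (B t) c l.
  move=> lc hc; exists c, #|cverts c :&: B t|; split; first exact: leq_trans hc _.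
  by split=> //; apply: trace_le1_attractor.
have /card_gt1P[a [b [aS bS ab]]] := full_td_bag_gt1 full t eirr (two_connected_edge G2).
have [C0 lC0 [/(small _ lC0)//|trC0]] := longest_cycle_trace2 hlct aS bS ab.
have [attC0|/(not_attractor_crossing lC0)[C lC [eqC crC]]] := classic (attractor e (B t) C0).
  by exists C0, 2; split => //; split => //; rewrite trC0 cards2 ab.
have trC : cverts C :&: B t = [set a; b] by rewrite -eqC.
have [p [q [u [v [lC' pqS qp [up vq] nuv]]]]] := crossing_split esym lC trC ab crC.
have uS : u \notin B t by have := pqS u; rewrite mem_cat up inE => /(_ isT).
have [x1 x1S x1u] := exists_bag_vertex_off_component full uS.
have x1a := nonadjacent_neq_endpoint esym lC' pqS up x1u.
have [D lD [/(small _ lD)//|trD]] := longest_cycle_trace2 hlct x1S aS x1a.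
exfalso; apply: (crossing_cut_vertex esym lC' aS bS pqS up vq nuv qp x1u lD trD).
by apply: G2.2; rewrite cards1.
Qed.
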